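(* Let $x_1,\dots,x_{N+1}$ be i.i.d. uniform on $\mathbb S^{d-1}$ and $x_{i^*}$ the element of $\{x_1,\dots,x_N\}$ maximizing $x_i^\top x_{N+1}$. There is an absolute constant $c>0$ such that if $N\ge c\sqrt d\log d$, then $\mathbb E[x_{i^*}^\top x_{N+1}]\ge\frac{2}{(N+1)^2}$.
   Context: $\mathbb S^{d-1}$ is the unit sphere in $\mathbb R^d$; equivalently $i^*=\arg\min_{i\in[N]}\|x_i-x_{N+1}\|_2$. *)

From HB Require Import structures.
From mathcomp Require Import all_boot all_order all_algebra.
From mathcomp Require Import all_classical all_reals all_analysis.
Set Implicit Arguments. Unset Strict Implicit. Unset Printing Implicit Defensive.
Import Order.TTheory GRing.Theory Num.Theory.
Import numFieldNormedType.Exports.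
Local Open Scope classical_set_scope.
Local Open Scope ring_scope.

Section defs.
Variable R : realType.

(* Euclidean inner product on R^d, vectors represented as d.-tuple R
   (which carries the product = Borel sigma-algebra of R^d). *)
Definition dotp (d : nat) (x y : d.-tuple R) : R :=
  \sum_(j < d) tnth x j * tnth y j.

Definition sphere (d : nat) : set (d.-tuple R) := [set x | dotp x x = 1].

Definition orthogonal_mx (d : nat) (Q : 'M[R]_d) : Prop := Q *m Q^T = 1%:M.

Definition mxapp (d : nat) (Q : 'M[R]_d) (x : d.-tuple R) : d.-tuple R :=
  [tuple \sum_(j < d) Q i j * tnth x j | i < d].

(* X is uniformly distributed on the unit sphere S^{d-1}: its law is a
   probability measure carried by S^{d-1} and invariant under O(d), i.e.
   the normalized surface (Haar) measure of S^{d-1}. *)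
Definition uniform_on_sphere (dT : measure_display) (T : measurableType dT)
  (P : probability T R) (d : nat) (X : T -> d.-tuple R) : Prop :=
  [/\ measurable_fun setT X,
      P (X @^-1` @sphere d) = 1%E &
      forall Q : 'M[R]_d, orthogonal_mx Q ->
      forall B : set (d.-tuple R), measurable B ->
        P (X @^-1` B) = P (X @^-1` (mxapp Q @^-1` B))].

Definition mutually_independent (dT : measure_display) (T : measurableType dT)
  (P : probability T R) (I : finType) (d : nat) (X : I -> T -> d.-tuple R) : Prop :=
  forall B : I -> set (d.-tuple R), (forall i, measurable (B i)) ->
    P (\bigcap_(i in [set: I]) (X i @^-1` B i)) = (\prod_(i : I) P (X i @^-1` B i))%E.

End defs.

(* Put Y = X_N, a = <X_0, Y> and b = <X_1, Y>. As |a|, |b| <= 1,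
   max(a, b) = (a + b) / 2 + |a - b| / 2 >= (a + b) / 2 + (a - b)^2 / 4.
   Independence and the invariance of the uniform law under coordinate
   reflections and permutations give E a = E b = E[ab] = 0 and
   E a^2 = E b^2 = 1/d, so the expected maximum is at least 1/(2d).
   With c = 2 / ln 2 we get N >= 2 sqrt d, hence 1/(2d) >= 2/(N+1)^2. *)

From HB Require Import structures.
From mathcomp Require Import all_boot all_order all_algebra.
From mathcomp Require Import all_classical all_reals all_analysis.
From mathcomp Require Import ring lra measurable_realfun perm.
Import Order.TTheory GRing.Theory Num.Theory.
Import numFieldNormedType.Exports.
Local Open Scope classical_set_scope.
Local Open Scope ring_scope.
Set Implicit Arguments. Unset Strict Implicit. Unset Printing Implicit Defensive.

Section bounded_measurable.
Context d (T : measurableType d) (R : realType).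
Implicit Types f g : T -> R.

Definition bounded_measurable f :=
  measurable_fun setT f /\ exists M : R, forall x, `|f x| <= M.

Lemma bounded_measurable_cst k : bounded_measurable (fun=> k).
Proof. by split => //; exists `|k|. Qed.

Lemma bounded_measurableD f g : bounded_measurable f -> bounded_measurable g ->
  bounded_measurable (fun x => f x + g x).
Proof.
move=> [mf [M fM]] [mg [M' gM']]; split; first exact: measurable_funD.
by exists (M + M') => x; rewrite (le_trans (ler_normD _ _))// lerD.
Qed.

Lemma bounded_measurableM f g : bounded_measurable f -> bounded_measurable g ->
  bounded_measurable (fun x => f x * g x).
Proof.
move=> [mf [M fM]] [mg [M' gM']]; split; first exact: measurable_funM.
by exists (M * M') => x; rewrite normrM ler_pM.
Qed.

Lemma bounded_measurable_sum (I : Type) (s : seq I) (F : I -> T -> R) :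
  (forall i, bounded_measurable (F i)) ->
  bounded_measurable (fun x => \sum_(i <- s) F i x).
Proof.
move=> bF; elim: s => [|i s IH].
  by under eq_fun do rewrite big_nil; exact: bounded_measurable_cst.
by under eq_fun do rewrite big_cons; exact: bounded_measurableD.
Qed.

Lemma bounded_measurable_integrable_lty (mu : {measure set T -> \bar R}) f :
  (mu setT < +oo)%E -> bounded_measurable f -> mu.-integrable setT (EFin \o f).
Proof.
move=> muT [mf [M fM]]; apply: measurable_bounded_integrable => //.
exists M; split; first by rewrite num_real.
by move=> M' MM' x _ /=; rewrite (le_trans (fM x))// ltW.
Qed.

Section finite_measure.
Variable mu : {finite_measure set T -> \bar R}.

Lemma bounded_measurable_integrable f : bounded_measurable f ->
  mu.-integrable setT (EFin \o f).
Proof. by apply: bounded_measurable_integrable_lty; exact: fin_num_fun_lty. Qed.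

Lemma EFin_Rintegral f : bounded_measurable f ->
  (\int[mu]_x f x)%:E = (\int[mu]_x (f x)%:E)%E.
Proof.
by move=> bf; rewrite fineK//; apply: integrable_fin_num => //;
  exact: bounded_measurable_integrable.
Qed.

Lemma Rintegral_sum (I : Type) (s : seq I) (F : I -> T -> R) :
  (forall i, bounded_measurable (F i)) ->
  \int[mu]_x (\sum_(i <- s) F i x) = \sum_(i <- s) \int[mu]_x F i x.
Proof.
move=> bF; elim: s => [|i s IH].
  by under eq_Rintegral do rewrite big_nil; rewrite big_nil Rintegral_cst// mul0r.
under eq_Rintegral do rewrite big_cons.
rewrite RintegralD ?IH ?big_cons//; apply: bounded_measurable_integrable => //.
exact: bounded_measurable_sum.
Qed.

End finite_measure.
End bounded_measurable.

Lemma bounded_measurable_comp d d' (T : measurableType d) (T' : measurableType d')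
  (R : realType) (U : T' -> T) (f : T -> R) :
  measurable_fun setT U -> bounded_measurable f ->
  bounded_measurable (fun w => f (U w)).
Proof.
move=> mU [mf [M fM]]; split; first exact: measurableT_comp mf mU.
by exists M.
Qed.

Section independence.
Context d (T : measurableType d) (R : realType) (P : probability T R).

Definition independent d1 d2 (T1 : measurableType d1) (T2 : measurableType d2)
    (U : T -> T1) (V : T -> T2) :=
  forall A B, measurable A -> measurable B ->
  P (U @^-1` A `&` V @^-1` B) = (P (U @^-1` A) * P (V @^-1` B))%E.

Lemma Rintegral_distribution d' (T' : measurableType d') (U : {RV P >-> T'})
    (F : T' -> R) : bounded_measurable F ->
  \int[distribution P U]_y F y = \int[P]_w F (U w).
Proof.
move=> bF; rewrite /Rintegral integral_distribution//.
  exact/measurable_EFinP/bF.1.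
exact/bounded_measurable_integrable/bounded_measurable_comp.
Qed.

Lemma independent_Rintegral_mul d1 d2 (T1 : measurableType d1)
    (T2 : measurableType d2) (U : T -> T1) (V : T -> T2) (f : T1 -> R) (g : T2 -> R) :
  measurable_fun setT U -> measurable_fun setT V -> independent U V ->
  bounded_measurable f -> bounded_measurable g ->
  \int[P]_w (f (U w) * g (V w)) = \int[P]_w f (U w) * \int[P]_w g (V w).
Proof.
move=> mU mV UV bf bg.
pose U' : {mfun T >-> T1} := mfun_Sub (mem_set mU).
pose V' : {mfun T >-> T2} := mfun_Sub (mem_set mV).
pose W' : {mfun T >-> (T1 * T2)%type} := mfun_Sub (mem_set (measurable_fun_pair mU mV)).
pose lawU : probability T1 R := distribution P U'.
pose lawV : probability T2 R := distribution P V'.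
have lawW S : measurable S -> (lawU \x lawV)%E S = distribution P W' S.
  by apply: product_measure_unique => A B mA mB; exact: UV.
have lawUV_setT : (lawU \x lawV)%E setT = 1%E.
  rewrite -setXTT product_measure1E// -[RHS]mule1.
  by congr (_ * _)%E; exact: probability_setT.
have bfg : bounded_measurable (fun z : T1 * T2 => f z.1 * g z.2).
  by apply: bounded_measurableM; apply: bounded_measurable_comp.
rewrite -(Rintegral_distribution W' bfg) -(Rintegral_distribution U' bf).
rewrite -(Rintegral_distribution V' bg) -RintegralZr//; last first.
  exact: bounded_measurable_integrable.
rewrite /Rintegral (eq_measure_integral (lawU \x lawV)%E); last first.
  by move=> S mS _; exact/esym/lawW.
rewrite -integral12_prod_meas1; last first.
  apply: bounded_measurable_integrable_lty bfg.
  by change ((lawU \x lawV)%E setT < +oo)%E; rewrite lawUV_setT ltry.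
congr fine; apply: eq_integral => a _; rewrite /fubini_F /=.
under eq_integral do rewrite EFinM.
rewrite integralZl//; last exact: bounded_measurable_integrable.
by rewrite -EFin_Rintegral// -EFinM.
Qed.

Lemma independent_pair d1 d2 d3 (T1 : measurableType d1) (T2 : measurableType d2)
    (T3 : measurableType d3) (U1 : T -> T1) (U2 : T -> T2) (V : T -> T3) :
  measurable_fun setT U1 -> measurable_fun setT U2 -> measurable_fun setT V ->
  (forall A B C, measurable A -> measurable B -> measurable C ->
    P (U1 @^-1` A `&` U2 @^-1` B `&` V @^-1` C) =
    (P (U1 @^-1` A `&` U2 @^-1` B) * P (V @^-1` C))%E) ->
  independent (fun w => (U1 w, U2 w)) V.
Proof.
(* For fixed C, both sides are finite measures in S that agree on the
   pi-system of measurable rectangles. *)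
move=> mU1 mU2 mV U12V S C mS mC.
have mW := measurable_fun_pair mU1 mU2.
have mVC : measurable (V @^-1` C) by rewrite -[X in measurable X]setTI; exact: mV.
have PVC_ge0 : 0 <= fine (P (V @^-1` C)) by exact/fine_ge0/measure_ge0.
pose W' : {mfun T >-> (T1 * T2)%type} := mfun_Sub (mem_set mW).
(* the measure [S |-> P ((U1, U2) @^-1` S `&` V @^-1` C)] *)
pose m1 := measure_function_pushforward__canonical__measure_function_Measure
  (mrestr P mVC) mW.
pose m2 := mscale (NngNum PVC_ge0) (distribution P W').
have PVC_fin : P (V @^-1` C) \is a fin_num.
  by rewrite ge0_fin_numE// (le_lt_trans (probability_le1 P mVC) (ltry _)).
pose G := [set A `*` B | A in @measurable _ T1 & B in @measurable _ T2].
have setIG : setI_closed G.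
  move=> _ _ [A1 mA1 [B1 mB1 <-]] [A2 mA2 [B2 mB2 <-]].
  rewrite -setXI; exists (A1 `&` A2); first exact: measurableI.
  by exists (B1 `&` B2) => //; exact: measurableI.
have GT (k : nat) : G setT by exists setT => //; exists setT => //; rewrite setXTT.
have m12 A : G A -> m1 A = m2 A.
  move=> [A1 mA1 [B1 mB1 <-]]; rewrite /m1 /m2 /mscale /= fineK// muleC.
  exact: U12V.
have m1_lty (k : nat) : (m1 setT < +oo)%E.
  rewrite /m1 /= /mrestr /pushforward preimage_setT setTI.
  exact: (le_lt_trans (probability_le1 P mVC) (ltry _)).
have GT_cover : \bigcup_(k : nat) setT = [set: T1 * T2] by rewrite bigcup_const.
have := measure_unique G (fun=> setT) (measurable_prod_measurableType _ _)
  setIG GT GT_cover m1 m2 m12 m1_lty S mS.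
by rewrite /= /pushforward /mrestr /mscale /= fineK// muleC.
Qed.

Lemma independent_Rintegral_sum_mul d1 d2 (T1 : measurableType d1)
    (T2 : measurableType d2) (I : finType) (U : T -> T1) (V : T -> T2)
    (a b : I -> T1 -> R) (c : I -> T2 -> R) :
  measurable_fun setT U -> measurable_fun setT V -> independent U V ->
  (forall i, bounded_measurable (a i)) -> (forall i, bounded_measurable (b i)) ->
  (forall i, bounded_measurable (c i)) ->
  \int[P]_w ((\sum_i a i (U w) * c i (V w)) * (\sum_k b k (U w) * c k (V w))) =
  \sum_i \sum_k \int[P]_w (a i (U w) * b k (U w)) * \int[P]_w (c i (V w) * c k (V w)).
Proof.
move=> mU mV UV ba bb bc.
have bab i k : bounded_measurable (fun x => a i x * b k x) by exact: bounded_measurableM.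
have bcc i k : bounded_measurable (fun y => c i y * c k y) by exact: bounded_measurableM.
have babcc i k : bounded_measurable
    (fun w => a i (U w) * b k (U w) * (c i (V w) * c k (V w))).
  apply: bounded_measurableM; first exact: bounded_measurable_comp mU (bab i k).
  exact: bounded_measurable_comp mV (bcc i k).
have expand w : (\sum_i a i (U w) * c i (V w)) * (\sum_k b k (U w) * c k (V w)) =
    \sum_i \sum_k a i (U w) * b k (U w) * (c i (V w) * c k (V w)).
  rewrite mulr_suml; apply: eq_bigr => i _.
  by rewrite mulr_sumr; apply: eq_bigr => k _; ring.
under eq_Rintegral do rewrite expand.
rewrite Rintegral_sum => [|i]; last exact: bounded_measurable_sum.
apply: eq_bigr => i _; rewrite Rintegral_sum//.
apply: eq_bigr => k _; exact: (independent_Rintegral_mul mU mV UV (bab i k) (bcc i k)).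
Qed.

End independence.

Section mutual_independence.
Context d (T : measurableType d) (R : realType) (P : probability T R).
Context (I : finType) (n : nat) (X : I -> T -> n.-tuple R).
Hypothesis indX : mutually_independent P X.

Lemma mutually_independent_seq (s : seq I) (B : I -> set (n.-tuple R)) :
  uniq s -> (forall i, measurable (B i)) ->
  P (\bigcap_(i in [set` s]) X i @^-1` B i) = (\prod_(i <- s) P (X i @^-1` B i))%E.
Proof.
move=> s_uniq mB.
pose B' i := if i \in s then B i else setT.
have mB' i : measurable (B' i) by rewrite /B'; case: ifP.
have -> : \bigcap_(i in [set` s]) X i @^-1` B i = \bigcap_(i in [set: I]) X i @^-1` B' i.
  apply/seteqP; split => w Xw i.
    by rewrite /B'; case: ifP => // si _; exact: Xw.
  by move=> si; move: (Xw i); rewrite /B' si; apply.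
rewrite (indX mB') (big_uniq _ s_uniq) [RHS]big_mkcond /=.
apply: eq_bigr => i _; rewrite /B'; case: ifP => //.
by rewrite preimage_setT probability_setT.
Qed.

Lemma mutually_independent2 i j : i != j -> independent P (X i) (X j).
Proof.
move=> ij A B mA mB.
pose C l := if l == i then A else B.
have mC l : measurable (C l) by rewrite /C; case: ifP.
have uij : uniq [:: i; j] by rewrite /= inE ij.
have := mutually_independent_seq uij mC.
by rewrite bigcap_seq !big_cons !big_nil setIT mule1 /C eqxx eq_sym (negbTE ij).
Qed.

Hypothesis mX : forall i, measurable_fun setT (X i).

Lemma mutually_independent3 i j k : i != j -> i != k -> j != k ->
  independent P (fun w => (X i w, X j w)) (X k).
Proof.
move=> ij ik jk; apply: independent_pair => // A B C mA mB mC.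
pose D l := if l == i then A else if l == j then B else C.
have mD l : measurable (D l) by rewrite /D; case: ifP => _ //; case: ifP.
have uijk : uniq [:: i; j; k] by rewrite /= !inE negb_or ij ik jk.
have uij : uniq [:: i; j] by rewrite /= inE ij.
have := mutually_independent_seq uijk mD; have := mutually_independent_seq uij mD.
rewrite !bigcap_seq !big_cons !big_nil !setIT !mule1 /D eqxx !(eq_sym _ i).
rewrite (negbTE ij) (negbTE ik) eqxx (eq_sym k j) (negbTE jk) -setIA => -> ->.
by rewrite muleA.
Qed.

End mutual_independence.

Section orthogonal_maps.
Context (R : realType) (n : nat).
Implicit Types (x : n.-tuple R) (s : 'rV[R]_n).

Lemma tnth_mxapp (Q : 'M[R]_n) x i : tnth (mxapp Q x) i = \sum_j Q i j * tnth x j.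
Proof. exact: tnth_mktuple. Qed.

Lemma measurable_mxapp (Q : 'M[R]_n) : measurable_fun setT (mxapp Q).
Proof.
apply/measurable_fun_tnthP => i /=.
apply: (eq_measurable_fun (fun x => \sum_j Q i j * tnth x j)).
  by move=> x _ /=; rewrite tnth_mxapp.
by apply: measurable_sum => j; apply: measurable_funM => //; exact: measurable_tnth.
Qed.

Lemma diag_mx_orthogonal s : (forall i, s 0 i ^+ 2 = 1) -> orthogonal_mx (diag_mx s).
Proof.
move=> s2; rewrite /orthogonal_mx tr_diag_mx mul_diag_mx; apply/matrixP => i j.
by rewrite !mxE mulrnAr -expr2 s2.
Qed.

Lemma tnth_mxapp_diag_mx s x i : tnth (mxapp (diag_mx s) x) i = s 0 i * tnth x i.
Proof.
rewrite tnth_mxapp (bigD1 i)//= big1 ?addr0 => [|j ji]; first by rewrite mxE eqxx.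
by rewrite mxE eq_sym (negbTE ji) mul0r.
Qed.

Lemma perm_mx_orthogonal (p : 'S_n) : orthogonal_mx (perm_mx p : 'M[R]_n).
Proof. by rewrite /orthogonal_mx tr_perm_mx -perm_mxM fingroup.mulgV perm_mx1. Qed.

Lemma tnth_mxapp_perm_mx (p : 'S_n) x i : tnth (mxapp (perm_mx p) x) i = tnth x (p i).
Proof.
rewrite tnth_mxapp (bigD1 (p i))//= big1 ?addr0 => [|j jp]; first by rewrite !mxE eqxx mul1r.
by rewrite !mxE eq_sym (negbTE jp) mul0r.
Qed.

Definition reflection_mx (j : 'I_n) : 'M[R]_n := diag_mx (\row_i (-1) ^+ (i == j)).

Lemma reflection_mx_orthogonal j : orthogonal_mx (reflection_mx j).
Proof. by apply: diag_mx_orthogonal => i; rewrite mxE sqrr_sign. Qed.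

Lemma tnth_mxapp_reflection_mx j x i :
  tnth (mxapp (reflection_mx j) x) i = (-1) ^+ (i == j) * tnth x i.
Proof. by rewrite tnth_mxapp_diag_mx mxE. Qed.

End orthogonal_maps.

Section clip.
Context (R : realType).

(* [clip t] is [t] truncated to [[-1, 1]]. Truncating coordinates makes every
   integrand below bounded everywhere, and changes nothing on the sphere. *)
Definition clip (t : R) := (`|t + 1| - `|t - 1|) / 2.

Lemma clip_spec t : [\/ t <= -1 /\ clip t = -1, 1 <= t /\ clip t = 1 |
  -1 <= t <= 1 /\ clip t = t].
Proof.
rewrite /clip; have [t1|t1] := lerP 0 (t + 1); have [t2|t2] := lerP 0 (t - 1);
  rewrite ?(ger0_norm t1) ?(ger0_norm t2) ?(ltr0_norm t1) ?(ltr0_norm t2).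
- by apply: Or32; split; [lra|field].
- by apply: Or33; split; [apply/andP; split; lra|field].
- lra.
- by apply: Or31; split; [lra|field].
Qed.

Lemma clip_le1 t : `|clip t| <= 1.
Proof. by rewrite ler_norml; case: (clip_spec t) => -[h ->]; apply/andP; split; lra. Qed.

Lemma clip_id t : `|t| <= 1 -> clip t = t.
Proof. by rewrite ler_norml => /andP[t1 t2]; case: (clip_spec t) => -[h ->] //; lra. Qed.

Lemma clipN t : clip (- t) = - clip t.
Proof. by case: (clip_spec t) => -[h ->]; case: (clip_spec (- t)) => -[h' ->]; lra. Qed.

Lemma measurable_clip : measurable_fun setT clip.
Proof.
apply: measurable_funM => //; apply: measurable_funB;
  by apply: measurableT_comp => //; apply: measurable_funD.
Qed.

Variable n : nat.
Implicit Types x y : n.-tuple R.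

Definition cclip (j : 'I_n) x := clip (tnth x j).

Definition cdotp x y := \sum_j cclip j x * cclip j y.

Lemma bounded_measurable_cclip j : bounded_measurable (cclip j).
Proof.
split; last by exists 1 => x; exact: clip_le1.
by apply: measurableT_comp; [exact: measurable_clip|exact: measurable_tnth].
Qed.

Lemma measurable_dotp d (T : measurableType d) (f g : T -> n.-tuple R) :
  measurable_fun setT f -> measurable_fun setT g ->
  measurable_fun setT (fun w => dotp (f w) (g w)).
Proof.
move=> mf mg; apply: measurable_sum => j; apply: measurable_funM.
- exact: measurableT_comp (measurable_tnth j) mf.
- exact: measurableT_comp (measurable_tnth j) mg.
Qed.

Lemma measurable_sphere : measurable (@sphere R n).
Proof.
have := @measurable_dotp _ _ id id (@measurable_id _ _ _) (@measurable_id _ _ _).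
move=> /(_ measurableT [set 1]) mS; rewrite -[X in measurable X]setTI.
apply: mS; exact: measurable_set1.
Qed.

Lemma sphere_tnth_le1 x j : sphere x -> `|tnth x j| <= 1.
Proof.
rewrite /sphere /dotp /= => x1.
rewrite -(@ler_pXn2r _ 2)// ?nnegrE// expr1n real_normK ?num_real// expr2.
by rewrite -x1 (bigD1 j)//= lerDl sumr_ge0// => k _; rewrite -expr2 sqr_ge0.
Qed.

Lemma cdotp_sphere x y : sphere x -> sphere y -> cdotp x y = dotp x y.
Proof.
move=> x1 y1; apply: eq_bigr => j _.
by rewrite /cclip !clip_id//; exact: sphere_tnth_le1.
Qed.

Lemma dotp_sphere_le1 x y : sphere x -> sphere y -> `|dotp x y| <= 1.
Proof.
rewrite /sphere /= => x1 y1.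
have dotpB : 0 <= dotp x x + dotp y y - 2 * dotp x y.
  rewrite /dotp mulr_sumr -!big_split -sumrN -big_split sumr_ge0// => j _ /=.
  by rewrite (_ : _ + _ = (tnth x j - tnth y j) ^+ 2) ?sqr_ge0//; ring.
have dotpD : 0 <= dotp x x + dotp y y + 2 * dotp x y.
  rewrite /dotp mulr_sumr -!big_split sumr_ge0// => j _ /=.
  by rewrite (_ : _ + _ = (tnth x j + tnth y j) ^+ 2) ?sqr_ge0//; ring.
by rewrite ler_norml; apply/andP; split; lra.
Qed.

End clip.

Section uniform_on_sphere.
Context d (T : measurableType d) (R : realType) (P : probability T R).
Context (n : nat) (X : T -> n.-tuple R).
Hypothesis unifX : uniform_on_sphere P X.

Lemma uniform_on_sphere_measurable : measurable_fun setT X.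
Proof. by case: unifX. Qed.

Lemma uniform_on_sphere_ae : {ae P, forall w, sphere (X w)}.
Proof.
have mXS : measurable (X @^-1` @sphere R n).
  rewrite -[X in measurable X]setTI.
  by apply: uniform_on_sphere_measurable => //; exact: measurable_sphere.
exists (~` (X @^-1` @sphere R n)); split => //; first exact: measurableC.
by case: unifX => _ PXS _; rewrite probability_setC// PXS subee.
Qed.

Lemma Rintegral_mxapp (Q : 'M[R]_n) (F : n.-tuple R -> R) :
  orthogonal_mx Q -> bounded_measurable F ->
  \int[P]_w F (mxapp Q (X w)) = \int[P]_w F (X w).
Proof.
move=> oQ bF; have mX := uniform_on_sphere_measurable.
have mQX := measurableT_comp (measurable_mxapp Q) mX.
pose X' : {mfun T >-> n.-tuple R} := mfun_Sub (mem_set mX).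
pose QX' : {mfun T >-> n.-tuple R} := mfun_Sub (mem_set mQX).
rewrite -(Rintegral_distribution X' bF) -(Rintegral_distribution QX' bF).
congr fine; apply: eq_measure_integral => B mB _.
by case: unifX => _ _ /(_ Q oQ B mB).
Qed.

Let bounded_cclipX j : bounded_measurable (fun w => cclip j (X w)).
Proof.
exact: bounded_measurable_comp uniform_on_sphere_measurable (bounded_measurable_cclip R j).
Qed.

Lemma Rintegral_cclip j : \int[P]_w cclip j (X w) = 0.
Proof.
have := Rintegral_mxapp (reflection_mx_orthogonal R j) (bounded_measurable_cclip R j).
under eq_Rintegral do
  rewrite /cclip tnth_mxapp_reflection_mx eqxx mulN1r clipN -mulN1r -/(cclip j _).
by rewrite RintegralZl//; [lra|exact: bounded_measurable_integrable].
Qed.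

Let bounded_cclipX2 j k :
  bounded_measurable (fun w => cclip j (X w) * cclip k (X w)).
Proof. exact: bounded_measurableM. Qed.

Lemma Rintegral_cclip_mul_neq j k : j != k ->
  \int[P]_w (cclip j (X w) * cclip k (X w)) = 0.
Proof.
move=> jk; have := Rintegral_mxapp (reflection_mx_orthogonal R j)
  (bounded_measurableM (bounded_measurable_cclip R j) (bounded_measurable_cclip R k)).
under eq_Rintegral do rewrite /cclip !tnth_mxapp_reflection_mx eqxx eq_sym (negbTE jk)
  mulN1r mul1r clipN mulNr -mulN1r -/(cclip j _) -/(cclip k _).
by rewrite RintegralZl//; [lra|exact: bounded_measurable_integrable].
Qed.

Lemma Rintegral_cclip_sqr_eq j k :
  \int[P]_w (cclip j (X w) * cclip j (X w)) = \int[P]_w (cclip k (X w) * cclip k (X w)).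
Proof.
rewrite -(Rintegral_mxapp (perm_mx_orthogonal R (tperm j k))
  (bounded_measurableM (bounded_measurable_cclip R j) (bounded_measurable_cclip R j))).
by under eq_Rintegral do rewrite /cclip !tnth_mxapp_perm_mx tpermL.
Qed.

Lemma Rintegral_cclip_sqr_sum :
  \sum_j \int[P]_w (cclip j (X w) * cclip j (X w)) = 1.
Proof.
rewrite -Rintegral_sum// /Rintegral (ae_eq_integral (cst 1%E))//=.
- by rewrite integral_cst//= probability_setT mul1e.
- apply/measurable_EFinP; apply: measurable_sum => j; exact: (bounded_cclipX2 j j).1.
- apply: filterS (uniform_on_sphere_ae) => w Xw _; congr EFin.
  by rewrite -[RHS]Xw -cdotp_sphere.
Qed.

Lemma Rintegral_cclip_mul j k :
  \int[P]_w (cclip j (X w) * cclip k (X w)) = (j == k)%:R / n%:R.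
Proof.
have [<-|jk] := eqVneq j k; last by rewrite Rintegral_cclip_mul_neq// mul0r.
have n0 : n%:R != 0 :> R.
  by rewrite pnatr_eq0 -lt0n; case: j => j /= /(leq_ltn_trans (leq0n j)).
have := Rintegral_cclip_sqr_sum; under eq_bigr do rewrite (Rintegral_cclip_sqr_eq _ j).
rewrite sumr_const card_ord => sum1.
by apply: (mulfI n0); rewrite mul1r mulfV// mulr_natl.
Qed.

End uniform_on_sphere.

Section cdotp_moments.
Context d (T : measurableType d) (R : realType) (P : probability T R).
Context (n : nat) (X X' Y : T -> n.-tuple R).
Hypotheses (unifX : uniform_on_sphere P X) (unifX' : uniform_on_sphere P X').
Hypothesis unifY : uniform_on_sphere P Y.

Let mX := uniform_on_sphere_measurable unifX.
Let mX' := uniform_on_sphere_measurable unifX'.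
Let mY := uniform_on_sphere_measurable unifY.
Let bcclip := @bounded_measurable_cclip R n.

Lemma Rintegral_cdotp : independent P X Y -> \int[P]_w cdotp (X w) (Y w) = 0.
Proof.
move=> XY; rewrite Rintegral_sum => [|j]; last first.
  by apply: bounded_measurableM; exact: bounded_measurable_comp.
apply: big1 => j _.
by rewrite (independent_Rintegral_mul mX mY XY (bcclip j) (bcclip j))
  (Rintegral_cclip unifX) mul0r.
Qed.

Lemma Rintegral_cdotp_sqr : independent P X Y ->
  \int[P]_w (cdotp (X w) (Y w) * cdotp (X w) (Y w)) = n%:R^-1.
Proof.
move=> XY; rewrite (independent_Rintegral_sum_mul mX mY XY bcclip bcclip bcclip).
under eq_bigr => j _.
  under eq_bigr do rewrite (Rintegral_cclip_mul unifX) (Rintegral_cclip_mul unifY).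
  rewrite (bigD1 j)//= big1 => [|k kj]; last by rewrite eq_sym (negbTE kj) !mul0r.
  rewrite eqxx addr0 mul1r.
  over.
rewrite sumr_const card_ord.
have [n0|n0] := eqVneq (n%:R : R) 0; last by field.
by rewrite n0 invr0 mulr0 mul0rn.
Qed.

Lemma Rintegral_cdotp_mul : independent P X X' ->
  independent P (fun w => (X w, X' w)) Y ->
  \int[P]_w (cdotp (X w) (Y w) * cdotp (X' w) (Y w)) = 0.
Proof.
move=> XX' XX'Y.
have bcclip1 j : bounded_measurable (fun p : n.-tuple R * n.-tuple R => cclip j p.1).
  exact: bounded_measurable_comp measurable_fst (bcclip j).
have bcclip2 j : bounded_measurable (fun p : n.-tuple R * n.-tuple R => cclip j p.2).
  exact: bounded_measurable_comp measurable_snd (bcclip j).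
rewrite (independent_Rintegral_sum_mul (measurable_fun_pair mX mX') mY XX'Y
  bcclip1 bcclip2 bcclip).
apply: big1 => j _; apply: big1 => k _ /=.
by rewrite (independent_Rintegral_mul mX mX' XX' (bcclip j) (bcclip k))
  (Rintegral_cclip unifX) !mul0r.
Qed.

End cdotp_moments.

Section integral_monotonicity.
Context d (T : measurableType d) (R : realType) (mu : {measure set T -> \bar R}).
Local Open Scope ereal_scope.

Lemma le_measurable_integral (f g : T -> \bar R) :
  measurable_fun setT f -> measurable_fun setT g -> (forall x, f x <= g x) ->
  \int[mu]_x f x <= \int[mu]_x g x.
Proof.
move=> mf mg fg; rewrite integralE [leRHS]integralE leeB//.
- apply: ge0_le_integral => //; [exact: measurable_funepos..|] => x _.
  by apply: (funepos_le (D := setT)); rewrite ?in_setT// => y _; exact: fg.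
- apply: ge0_le_integral => //; [exact: measurable_funeneg..|] => x _.
  by apply: (funeneg_le (D := setT)); rewrite ?in_setT// => y _; exact: fg.
Qed.

Lemma ae_le_measurable_integral (f g : T -> \bar R) :
  measurable_fun setT f -> measurable_fun setT g ->
  {ae mu, forall x, f x <= g x} -> \int[mu]_x f x <= \int[mu]_x g x.
Proof.
move=> mf mg fg; have mgf : measurable_fun setT (fun x => maxe (g x) (f x)).
  exact: measurable_maxe.
rewrite (ae_eq_integral (fun x => maxe (g x) (f x)) g)//.
  by apply: le_measurable_integral => // x; rewrite le_max lexx orbT.
by apply: filterS fg => x fgx _; apply/esym/max_idPl.
Qed.

Lemma measurable_bigmaxe (I : Type) (s : seq I) (F : I -> T -> \bar R) :
  (forall i, measurable_fun setT (F i)) ->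
  measurable_fun setT (fun x => \big[maxe/-oo]_(i <- s) F i x).
Proof.
move=> mF; elim: s => [|i s IH].
  by under eq_fun do rewrite big_nil; exact: measurable_cst.
by under eq_fun do rewrite big_cons; exact: measurable_maxe.
Qed.

End integral_monotonicity.

Section max_minorant.
Context (R : realType).

Definition max_minorant (a b : R) := (a + b) / 2 + (a - b) ^+ 2 / 4.

Lemma max_minorant_le a b : `|a| <= 1 -> `|b| <= 1 -> max_minorant a b <= Num.max a b.
Proof.
rewrite /max_minorant !ler_norml => /andP[a1 a2] /andP[b1 b2].
by rewrite le_max; have [ab|ab] := lerP b a; apply/orP; [left|right]; nra.
Qed.

Lemma max_minorantE a b : max_minorant a b = 2^-1 * a + (2^-1 * b +
  (4^-1 * (a * a) + (4^-1 * (b * b) + - 2^-1 * (a * b)))).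
Proof. by rewrite /max_minorant; field. Qed.

Section max_minorant_integral.
Context d (T : measurableType d) (f g : T -> R).
Hypotheses (bf : bounded_measurable f) (bg : bounded_measurable g).

Lemma bounded_measurable_max_minorant :
  bounded_measurable (fun w => max_minorant (f w) (g w)).
Proof.
under eq_fun do rewrite max_minorantE.
by repeat apply: bounded_measurableD; repeat apply: bounded_measurableM;
  exact: bounded_measurable_cst || assumption.
Qed.

Lemma Rintegral_max_minorant (P : probability T R) (s : R) :
  \int[P]_w f w = 0 -> \int[P]_w g w = 0 ->
  \int[P]_w (f w * f w) = s -> \int[P]_w (g w * g w) = s ->
  \int[P]_w (f w * g w) = 0 ->
  \int[P]_w max_minorant (f w) (g w) = s / 2.
Proof.
move=> Ef Eg Eff Egg Efg; under eq_Rintegral do rewrite max_minorantE.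
rewrite !RintegralD// ?RintegralZl// ?Ef ?Eg ?Eff ?Egg ?Efg; first by field.
all: apply: bounded_measurable_integrable.
all: by repeat apply: bounded_measurableD; repeat apply: bounded_measurableM;
  exact: bounded_measurable_cst || assumption.
Qed.

End max_minorant_integral.
End max_minorant.

Section expected_max_dotp.
Context d (T : measurableType d) (R : realType) (P : probability T R).
Context (n N : nat) (X : 'I_N.+1 -> T -> n.-tuple R).
Hypotheses (indX : mutually_independent P X) (unifX : forall i, uniform_on_sphere P (X i)).
Hypothesis N_ge2 : (2 <= N)%N.

Let i0 := widen_ord (leqnSn N) (Ordinal (ltnW N_ge2)).
Let i1 := widen_ord (leqnSn N) (Ordinal N_ge2).

Let i01 : i0 != i1. Proof. by rewrite -val_eqE. Qed.
Let i0N : i0 != ord_max. Proof. by rewrite -val_eqE /= eq_sym -lt0n (ltnW N_ge2). Qed.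
Let i1N : i1 != ord_max. Proof. by rewrite -val_eqE /= neq_ltn N_ge2. Qed.

Let mX i := uniform_on_sphere_measurable (unifX i).

Let Z i w := cdotp (X i w) (X ord_max w).

Let bounded_Z i : bounded_measurable (Z i).
Proof.
apply: bounded_measurable_sum => j; apply: bounded_measurableM;
  exact: bounded_measurable_comp (bounded_measurable_cclip R j).
Qed.

Let Rintegral_Z i : i != ord_max -> \int[P]_w Z i w = 0.
Proof. by move=> iN; exact/Rintegral_cdotp/mutually_independent2. Qed.

Let Rintegral_Z_sqr i : i != ord_max -> \int[P]_w (Z i w * Z i w) = n%:R^-1.
Proof. by move=> iN; exact/Rintegral_cdotp_sqr/mutually_independent2. Qed.

Lemma expected_max_dotp_ge : (((2 * n%:R)^-1)%:E <=
  \int[P]_w (\big[maxe/-oo]_(i < N)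
               (dotp (X (widen_ord (leqnSn N) i) w) (X ord_max w))%:E))%E.
Proof.
have := Rintegral_max_minorant (bounded_Z i0) (bounded_Z i1) (Rintegral_Z i0N)
  (Rintegral_Z i1N) (Rintegral_Z_sqr i0N) (Rintegral_Z_sqr i1N)
  (Rintegral_cdotp_mul (unifX i0) (unifX i1) (unifX ord_max)
    (mutually_independent2 indX i01) (mutually_independent3 indX mX i01 i0N i1N)).
rewrite invfM mulrC => <-.
rewrite EFin_Rintegral; last exact: bounded_measurable_max_minorant.
apply: ae_le_measurable_integral.
- apply/measurable_EFinP.
  exact: (bounded_measurable_max_minorant (bounded_Z i0) (bounded_Z i1)).1.
- by apply: measurable_bigmaxe => i; apply/measurable_EFinP; exact: measurable_dotp.
- apply: filterS3 (uniform_on_sphere_ae (unifX i0)) (uniform_on_sphere_ae (unifX i1))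
    (uniform_on_sphere_ae (unifX ord_max)) => w s0 s1 sN.
  rewrite /Z !cdotp_sphere//.
  have := max_minorant_le (dotp_sphere_le1 s0 sN) (dotp_sphere_le1 s1 sN).
  rewrite le_max => /orP[le0|le1].
  + by apply: le_trans (le_bigmax _ _ (Ordinal (ltnW N_ge2))); rewrite lee_fin.
  + by apply: le_trans (le_bigmax _ _ (Ordinal N_ge2)); rewrite lee_fin.
Qed.

End expected_max_dotp.

Section sample_size.
Context (R : realType).

Lemma sqrt_le_sqrt_ln (d : nat) : (2 <= d)%N ->
  2 * Num.sqrt (d%:R : R) <= 2 / ln 2 * Num.sqrt d%:R * ln d%:R.
Proof.
move=> d_ge2; have ln2_gt0 : 0 < ln (2 : R) by rewrite ln_gt0// ltr1n.
rewrite mulrAC ler_wpM2r ?sqrtr_ge0// mulrAC ler_pdivlMr// ler_pM2l//.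
by rewrite ler_ln ?posrE ?ltr0n ?ler_nat// (leq_trans _ d_ge2).
Qed.

Lemma two_div_sqr_le (d N : nat) : (0 < d)%N -> 2 * Num.sqrt (d%:R : R) <= N%:R ->
  2 / N.+1%:R ^+ 2 <= (2 * d%:R : R)^-1.
Proof.
move=> d_gt0 dN; have d_ge0 : (0 : R) <= d%:R by rewrite ler0n.
have sqrt_d := sqr_sqrtr d_ge0; have := sqrtr_ge0 (d%:R : R).
have N1_gt0 : (0 : R) < N.+1%:R ^+ 2 by rewrite exprn_gt0// ltr0n.
rewrite ler_pdivrMr// mulrC ler_pdivlMr ?mulr_gt0 ?ltr0n// -natr1 => s_ge0; nra.
Qed.

End sample_size.

Theorem lemma18 (R : realType) :
  exists c : R, 0 < c /\
  forall (d N : nat), (2 <= d)%N ->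
  c * Num.sqrt d%:R * ln d%:R <= N%:R ->
  forall (dT : measure_display) (T : measurableType dT) (P : probability T R)
         (X : 'I_N.+1 -> T -> d.-tuple R),
    mutually_independent P X ->
    (forall i, uniform_on_sphere P (X i)) ->
    ((2 / (N.+1)%:R ^+ 2)%:E <=
      \int[P]_w (\big[maxe/-oo]_(i < N)
                   (dotp (X (widen_ord (leqnSn N) i) w) (X ord_max w))%:E))%E.
Proof.
exists (2 / ln 2); split; first by rewrite divr_gt0// ln_gt0// ltr1n.
move=> d N d_ge2 dN dT T P X indX unifX.
have {dN} dN := le_trans (sqrt_le_sqrt_ln R d_ge2) dN.
have N_ge2 : (2 <= N)%N.
  rewrite -(ler_nat R); apply: le_trans dN; rewrite -[leLHS]mulr1 ler_wpM2l//.
  by rewrite -[leLHS]sqrtr1 ler_sqrt ?ler1n// (leq_trans _ d_ge2).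
apply: le_trans (expected_max_dotp_ge indX unifX N_ge2).
by rewrite lee_fin two_div_sqr_le// (leq_trans _ d_ge2).
Qed.
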